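(* Let $\mathbb{I}=\{\mathbb{I}_1,\dots,\mathbb{I}_N\}$ be a random iterated function system on a compact metric space $(K,d)$. Then for all $\omega\in\Omega$, $\dim_{\mathrm P}F_\omega=\overline{\dim}_{\mathrm B}F_\omega$.
   Context: A random iterated function system on $(K,d)$ is a finite set $\mathbb{I}=\{\mathbb{I}_1,\dots,\mathbb{I}_N\}$ with $\mathbb{I}_i=\{S_{i,j}\}_{j\in\mathcal{I}_i}$, $\mathcal{I}_i$ finite nonempty, each $S_{i,j}:K\to K$ a bi-Lipschitz contraction ($0<\inf_{x\ne y}\frac{d(S_{i,j}x,S_{i,j}y)}{d(x,y)}$ and $\sup_{x\ne y}\frac{d(S_{i,j}x,S_{i,j}y)}{d(x,y)}<1$). $\Omega=\{1,\dots,N\}^{\mathbb{N}}$ and $F_\omega=\bigcap_k\bigcup_{i_1\in\mathcal{I}_{\omega_1},\dots,i_k\in\mathcal{I}_{\omega_k}}S_{\omega_1,i_1}\circ\cdots\circ S_{\omega_k,i_k}(K)$. $\dim_{\mathrm P}$ is packing dimension and $\overline{\dim}_{\mathrm B}$ upper box dimension. *)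

From HB Require Import structures.
From mathcomp Require Import all_boot all_order all_algebra.
From mathcomp Require Import all_classical all_reals all_analysis.
Set Implicit Arguments. Unset Strict Implicit. Unset Printing Implicit Defensive.
Import Order.TTheory GRing.Theory Num.Theory.
Local Open Scope classical_set_scope.
Local Open Scope ring_scope.

Section MetricNotions.
Variables (R : realType) (T : Type) (d : T -> T -> R).

Definition is_metric : Prop :=
  [/\ forall x y, d x y = 0 <-> x = y,
      forall x y, d x y = d y x &
      forall x y z, d x z <= d x y + d y z].

Definition dball (x : T) (r : R) : set T := [set y | d x y < r].

Definition d_open (U : set T) : Prop :=
  forall x, U x -> exists2 e : R, 0 < e & dball x e `<=` U.

Definition d_compact_space : Prop :=
  forall (I : Type) (U : I -> set T),
    (forall i, d_open (U i)) -> \bigcup_(i in setT) U i = setT ->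
    exists (n : nat) (f : 'I_n -> I), forall x, exists i, U (f i) x.

Definition bilip_contraction (S : T -> T) : Prop :=
  (exists2 a : R, 0 < a & forall x y, x <> y -> a <= d (S x) (S y) / d x y) /\
  (exists2 b : R, b < 1 & forall x y, x <> y -> d (S x) (S y) / d x y <= b).

Definition ddiam (A : set T) : \bar R :=
  ereal_sup [set (d x y)%:E | x in A & y in A].

Definition limsup0 (f : R -> \bar R) : \bar R :=
  ereal_inf [set ereal_sup [set f δ | δ in [set δ | 0 < δ < ε]] | ε in [set ε | 0 < ε]].

Definition cover_number (δ : R) (F : set T) : \bar R :=
  ereal_inf [set (n%:R)%:E | n in [set n : nat | exists U : 'I_n -> set T,
     (forall i, (ddiam (U i) <= δ%:E)%E) /\ F `<=` \bigcup_(i in setT) U i]].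

Definition upper_box_dim (F : set T) : \bar R :=
  limsup0 (fun δ => match cover_number δ F with
                    | EFin n => (ln n / (- ln δ))%:E
                    | +oo%E => +oo%E
                    | -oo%E => -oo%E end).

Definition packing_delta (s δ : R) (F : set T) : \bar R :=
  ereal_sup [set v : \bar R | exists (n : nat) (x : 'I_n -> T) (r : 'I_n -> R),
     [/\ forall i, F (x i) /\ 0 < r i <= δ,
         forall i j, i != j -> dball (x i) (r i) `&` dball (x j) (r j) = set0 &
         v = (\sum_(i < n) ((2 * r i) `^ s)%:E)%E]].

Definition packing_premeasure (s : R) (F : set T) : \bar R :=
  limsup0 (fun δ => packing_delta s δ F).

Definition packing_measure (s : R) (F : set T) : \bar R :=
  ereal_inf [set (\sum_(i <oo) packing_premeasure s (G i))%E |
     G in [set G : nat -> set T | F `<=` \bigcup_(i in setT) G i]].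

Definition packing_dim (F : set T) : \bar R :=
  ereal_inf [set s%:E | s in [set s : R | 0 <= s /\ packing_measure s F = 0%E]].

End MetricNotions.

(** Random IFS: N families; family i is indexed by 'I_(M i) (M i > 0),
    maps S i j : T -> T.  Level-k set:
    lvl k w = U_{j} S_{w 0, j} (lvl (k-1) (shift w)), lvl 0 w = K. *)
Fixpoint rifs_level (T : Type) (N : nat) (M : 'I_N -> nat)
    (S : forall i : 'I_N, 'I_(M i) -> T -> T) (k : nat) (w : nat -> 'I_N) : set T :=
  match k with
  | 0 => setT
  | k'.+1 => \bigcup_(j in [set: 'I_(M (w 0))])
               (S (w 0) j @` rifs_level S k' (fun n => w n.+1))
  end.

Definition rifs_attractor (T : Type) (N : nat) (M : 'I_N -> nat)
    (S : forall i : 'I_N, 'I_(M i) -> T -> T) (w : nat -> 'I_N) : set T :=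
  \bigcap_(k in [set: nat]) rifs_level S k w.

From HB Require Import structures.
From mathcomp Require Import all_boot all_order all_algebra.
From mathcomp Require Import all_classical all_reals all_analysis.
From mathcomp Require Import lra ring.
Import Order.TTheory GRing.Theory Num.Theory.
Local Open Scope classical_set_scope.
Local Open Scope ring_scope.

(* The inequality dim_P F <= upper box dim F holds for every set F: if
   N_δ(F) <= δ^-t for small δ and t < s, then among disjoint balls centred in F
   with radii in the dyadic shell (2^-(j+1) δ, 2^-j δ] there are at most
   N_(2^-(j+1) δ)(F) many, so the packing sums of P^s_δ(F) are O(δ^(s-t)) and
   P^s_0(F) = 0.
   Conversely let s < t < upper box dim F_ω and F_ω ⊆ ⋃ G_i.  The attractor is
   closed in a compact space, so by a Baire argument some G_i is dense in a
   cylinder S_(ω_1, j_1) ∘ ... ∘ S_(ω_k, j_k) (F_(σ^k ω)).  Since the maps are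
   bi-Lipschitz, a cylinder is as hard to cover as F_ω up to fixed factors, so
   G_i contains many separated points at arbitrarily small scales, whence
   P^s_0(G_i) >= 1 and P^s(F_ω) > 0. *)

Set Implicit Arguments. Unset Strict Implicit. Unset Printing Implicit Defensive.

Section RealFacts.
Variable R : realType.

Lemma exists_expr_lt (q e : R) : 0 <= q < 1 -> 0 < e -> exists j : nat, q ^+ j < e.
Proof.
move=> /andP[q0 q1] e0.
have /cvgrPdist_lt /(_ e e0) [N _ hN] : (q ^+ n) @[n --> \oo] --> 0.
  by apply: cvg_expr; rewrite ger0_norm.
exists N; have := hN N (leqnn N); rewrite sub0r normrN ger0_norm //.
exact: exprn_ge0.
Qed.

Lemma geometric_sum_le (z : R) J : 0 <= z < 1 -> \sum_(j < J) z ^+ j <= (1 - z)^-1.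
Proof.
move=> /andP[z0 z1].
have key : (\sum_(j < J) z ^+ j) * (1 - z) = 1 - z ^+ J.
  elim: J => [|J IH]; first by rewrite big_ord0 mul0r expr0 subrr.
  rewrite big_ord_recr /= mulrDl IH exprS; ring.
have hz : 0 < 1 - z by rewrite subr_gt0.
rewrite -(ler_pM2r hz) key mulVf ?gt_eqF //.
by rewrite lerBlDr lerDl exprn_ge0.
Qed.

Lemma powR_exprn (a x : R) j : 0 <= a -> (a ^+ j) `^ x = (a `^ x) ^+ j.
Proof.
move=> a0; elim: j => [|j IH]; first by rewrite !expr0 powR1.
by rewrite !exprS powRM ?exprn_ge0 // IH.
Qed.

Lemma sumr_pred_card n (P : pred 'I_n) : \sum_(i < n) (P i)%:R = #|P|%:R :> R.
Proof.
rewrite -sum1_card natr_sum [RHS]big_mkcond /=; apply: eq_bigr => i _.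
by rewrite unfold_in; case: (P i).
Qed.

Lemma half_powR_lt1 (x : R) : 0 < x -> (2^-1 : R) `^ x < 1.
Proof.
move=> x0; have q0 : (0 : R) < 2^-1 by rewrite invr_gt0.
rewrite /powR gt_eqF // expR_lt1 pmulr_rlt0 //.
by apply: ln_lt0; rewrite q0 invf_lt1 // ltr1n.
Qed.

Lemma oppr_ln_gt0 (δ : R) : 0 < δ < 1 -> 0 < - ln δ.
Proof. by move=> h; rewrite oppr_gt0; apply: ln_lt0. Qed.

Lemma powR_le_small (c u : R) : 0 < c -> 0 < u ->
  exists2 e : R, 0 < e & forall δ, 0 < δ < e -> δ `^ u <= c.
Proof.
move=> c0 u0; exists (c `^ u^-1); first exact: powR_gt0.
move=> δ /andP[δ0 hδ].
have -> : c = (c `^ u^-1) `^ u by rewrite -powRrM mulVf ?gt_eqF // powRr1 // ltW.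
by apply: ge0_ler_powR; rewrite ?nnegrE ?powR_ge0 ?ltW.
Qed.

Lemma powR_scale_ge1 (δ c P s t : R) : 0 < δ -> 0 < c -> 0 < P ->
  δ `^ (t - s) <= c `^ s / P -> 1 <= δ `^ (-t) / P * (δ * c) `^ s.
Proof.
move=> δ0 c0 P0 hδ.
have hδst : δ `^ (-t) * δ `^ s = δ `^ (s - t).
  by rewrite -powRD ?(gt_eqF δ0) ?implybT // addrC.
rewrite powRM ?(ltW δ0) ?(ltW c0) //.
have -> : δ `^ (-t) / P * (δ `^ s * c `^ s) = δ `^ (s - t) * (c `^ s / P).
  by rewrite -hδst; field; rewrite gt_eqF.
apply: le_trans (ler_wpM2l (powR_ge0 _ _) hδ).
rewrite -powRD ?(gt_eqF δ0) ?implybT //.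
have -> : s - t + (t - s) = 0 by ring.
by rewrite powRr0.
Qed.

Lemma dyadic_shell (q δ r : R) : 0 < q < 1 -> 0 < δ -> 0 < r <= δ ->
  exists j : nat, q ^+ j.+1 * δ < r /\ r <= q ^+ j * δ.
Proof.
move=> /andP[q0 q1] δ0 /andP[r0 rδ].
have hex : exists j, `[< q ^+ j.+1 * δ < r >].
  have hq : 0 <= q < 1 by rewrite ltW.
  have [j hj] := exists_expr_lt hq (divr_gt0 r0 δ0).
  exists j; apply/asboolP; rewrite -ltr_pdivlMr //; apply: le_lt_trans hj.
  by rewrite exprS ler_piMl ?exprn_ge0 // ltW.
case: (ex_minnP hex) => j /asboolP hj hmin; exists j; split => //.
case: j hj hmin => [|j] hj hmin; first by rewrite expr0 mul1r.
rewrite leNgt; apply/negP => hlt.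
by have := hmin j (asboolT hlt); rewrite ltnn.
Qed.

Lemma dyadic_term_eq (q δ s t : R) (j : nat) : 0 < q -> 0 < δ ->
  (q ^+ j.+1 * δ) `^ (-t) * (2 * q ^+ j * δ) `^ s =
  2 `^ s * q `^ (-t) * (q `^ (s - t)) ^+ j * δ `^ (s - t).
Proof.
move=> q0 δ0; have hq0 : q != 0 by rewrite gt_eqF.
have hδ0 : δ != 0 by rewrite gt_eqF.
rewrite powRM ?exprn_ge0 ?(ltW q0) ?(ltW δ0) //.
rewrite powRM ?mulr_ge0 ?exprn_ge0 ?(ltW q0) ?(ltW δ0) //.
rewrite powRM ?exprn_ge0 ?(ltW q0) //.
rewrite !powR_exprn ?(ltW q0) //.
rewrite (powRD (x:=q)) ?hq0 ?implybT // (powRD (x:=δ)) ?hδ0 ?implybT //.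
rewrite exprMn exprS; ring.
Qed.

(* Each radius lies in a shell (q^(j+1) δ, q^j δ] with q = 1/2; the hypothesis
   counts the radii above each shell's lower end, and the total is a geometric
   series in q^(s-t). *)
Lemma sum_powR_dyadic_le (s t δ : R) n (r : 'I_n -> R) :
  0 <= t -> t < s -> 0 < δ -> (forall i, 0 < r i <= δ) ->
  (forall j : nat, #|[pred i : 'I_n | ((2^-1)^+j.+1 * δ < r i)%R]|%:R
      <= ((2^-1)^+j.+1 * δ) `^ (-t)) ->
  \sum_(i < n) (2 * r i) `^ s <=
    2 `^ s * (2^-1) `^ (-t) / (1 - (2^-1) `^ (s - t)) * δ `^ (s - t).
Proof.
move=> t0 ts δ0 hr hc.
set q : R := 2^-1.
have q0 : 0 < q by rewrite invr_gt0.
have hq : 0 < q < 1 by rewrite q0 invf_lt1 // ltr1n.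
have s0 : 0 <= s by apply: ltW; exact: le_lt_trans ts.
have [jf hjf] := choice (fun i => dyadic_shell hq δ0 (hr i)).
set J := (\max_i jf i).+1.
pose c (j : nat) := (2 * q ^+ j * δ) `^ s.
have per i : (2 * r i) `^ s <= \sum_(j < J) ((q ^+ j.+1 * δ < r i)%R)%:R * c j.
  have jJ : (jf i < J)%N by rewrite ltnS; exact: leq_bigmax.
  rewrite (bigD1 (Ordinal jJ)) //=.
  have [h1 h2] := hjf i; rewrite h1 mul1r.
  have hrest : 0 <= \sum_(j < J | j != Ordinal jJ) ((q ^+ j.+1 * δ < r i)%R)%:R * c j.
    by apply: sumr_ge0 => j _; rewrite mulr_ge0 ?powR_ge0.
  have hle : (2 * r i) `^ s <= c (jf i).
    apply: ge0_ler_powR => //; rewrite ?nnegrE.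
    - by rewrite mulr_ge0 // ltW //; case/andP: (hr i).
    - by rewrite !mulr_ge0 ?exprn_ge0 // ltW.
    - by rewrite -mulrA ler_pM2l.
  lra.
have z0 : 0 <= q `^ (s - t) by exact: powR_ge0.
have z1 : q `^ (s - t) < 1 by apply: half_powR_lt1; rewrite subr_gt0.
apply: (le_trans (ler_sum _ (fun i _ => per i))).
rewrite exchange_big /=.
under eq_bigr do rewrite -mulr_suml sumr_pred_card.
apply: le_trans.
  by apply: ler_sum => j _; apply: (ler_wpM2r (powR_ge0 _ _)); exact: (hc j).
under eq_bigr do rewrite dyadic_term_eq //.
rewrite -mulr_suml -mulr_sumr.
apply: ler_wpM2r; first exact: powR_ge0.
apply: ler_wpM2l; first by rewrite mulr_ge0 ?powR_ge0.
by apply: geometric_sum_le; rewrite z0 z1.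
Qed.

Lemma limsup0_ge (f : R -> \bar R) c :
  (forall δ, 0 < δ < 1 -> (c <= f δ)%E) -> (c <= limsup0 f)%E.
Proof.
move=> h; apply/ereal_infP => _ [ε ε0 <-].
have hm1 : Order.min ε 1 <= ε by rewrite ge_min lexx.
have hm2 : Order.min ε 1 <= 1 by rewrite ge_min lexx orbT.
have m0 : 0 < Order.min ε 1 by rewrite lt_min ε0 ltr01.
apply: le_ereal_sup_tmp; exists (f (Order.min ε 1 / 2)).
  exists (Order.min ε 1 / 2) => //; apply/andP; split; lra.
by apply: h; apply/andP; split; lra.
Qed.

Lemma limsup0_le0 (f : R -> \bar R) :
  (forall η : R, 0 < η -> exists2 ε : R, 0 < ε &
     forall δ, 0 < δ < ε -> (f δ <= η%:E)%E) -> (limsup0 f <= 0)%E.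
Proof.
move=> h; apply/lee_addgt0Pr => η η0; rewrite add0e.
have [ε ε0 hε] := h η η0.
apply: ge_ereal_inf; exists (ereal_sup [set f δ | δ in [set δ | 0 < δ < ε]]).
  by exists ε.
by apply/ereal_supP => _ [δ hδ <-]; exact: hε.
Qed.

Lemma limsup0_lt (f : R -> \bar R) (t : R) : (limsup0 f < t%:E)%E ->
  exists2 ε : R, 0 < ε & forall δ, 0 < δ < ε -> (f δ < t%:E)%E.
Proof.
move=> /ereal_inf_lt [_ [ε ε0 <-] hlt]; exists ε => // δ hδ.
by apply: le_lt_trans hlt; apply: ereal_sup_ubound; exists δ.
Qed.

Lemma limsup0_gt (f : R -> \bar R) (t : R) : (t%:E < limsup0 f)%E ->
  forall ε : R, 0 < ε -> exists δ, 0 < δ < ε /\ (t%:E < f δ)%E.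
Proof.
move=> h ε ε0.
have /ereal_sup_gt [_ [δ hδ <-] ht] :=
  lt_le_trans h (ereal_inf_lbound (ex_intro2 _ _ ε ε0 erefl)).
by exists δ.
Qed.

End RealFacts.

Section Metric.
Variables (R : realType) (T : Type) (d : T -> T -> R).
Hypothesis d_metric : is_metric d.

Lemma d_refl x : d x x = 0.
Proof. by case: d_metric => h _ _; exact: (proj2 (h x x) erefl). Qed.

Lemma d_sym x y : d x y = d y x.
Proof. by case: d_metric. Qed.

Lemma d_triangle x y z : d x z <= d x y + d y z.
Proof. by case: d_metric. Qed.

Lemma d_eq0 x y : d x y = 0 -> x = y.
Proof. by case: d_metric => h _ _; exact: (proj1 (h x y)). Qed.

Lemma d_ge0 x y : 0 <= d x y.
Proof.
have := d_triangle x y x; rewrite d_refl (d_sym y x) => h.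
by rewrite -(@pmulr_rge0 _ 2) // mulr2n mulrDl !mul1r.
Qed.

Definition dinterior (A : set T) : set T :=
  [set x | exists2 e, 0 < e & dball d x e `<=` A].

Definition dclosure (A : set T) : set T :=
  [set x | forall e, 0 < e -> exists2 y, A y & d x y < e].

Definition dclosed (A : set T) : Prop :=
  forall x, ~ A x -> exists2 e, 0 < e & forall y, d x y < e -> ~ A y.

Lemma dinterior_open A : d_open d (dinterior A).
Proof.
move=> x [e e0 hA]; exists e => // y hy.
have hy' : 0 < e - d x y by rewrite subr_gt0.
exists (e - d x y) => // z hz; apply: hA; rewrite /dball /=.
have := d_triangle x y z; move: hz; rewrite /dball /= => hz h.
by rewrite (le_lt_trans h) // -ltrBrDl.
Qed.

Lemma dinterior_sub A : dinterior A `<=` A.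
Proof. by move=> x [e e0]; apply; rewrite /dball /= d_refl. Qed.

Lemma dinterior_mono A B : A `<=` B -> dinterior A `<=` dinterior B.
Proof. by move=> AB x [e e0 h]; exists e => // y /h /AB. Qed.

Lemma dclosure_sub A : dclosed A -> dclosure A `<=` A.
Proof.
move=> cA x hx; apply: contrapT => nAx; have [e e0 he] := cA x nAx.
by have [y Ay hxy] := hx e e0; exact: he y hxy Ay.
Qed.

Lemma dclosed_bigcap (I : Type) (A : I -> set T) :
  (forall i, dclosed (A i)) -> dclosed (\bigcap_(i in setT) A i).
Proof.
move=> h x hx.
have [i nix] : exists i, ~ A i x.
  by apply/existsNP => h'; apply: hx => i _; exact: h'.
have [e e0 he] := h i x nix; exists e => // y /he hy hy'; apply: hy; exact: hy'.
Qed.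

Lemma dclosed_bigcup (I : finType) (A : I -> set T) :
  (forall i, dclosed (A i)) -> dclosed (\bigcup_(i in setT) A i).
Proof.
move=> h x hx.
have H1 i : exists e : R, 0 < e /\ forall y, d x y < e -> ~ A i y.
  have [e e0 he] := h i x (fun hi => hx (ex_intro2 _ _ i Logic.I hi)).
  by exists e.
have [e he] := choice H1.
exists (\big[Order.min/1]_i e i).
  by apply: lt_bigmin => // i _; case: (he i).
move=> y hy [i _ hi]; case: (he i) => _ /(_ y); apply => //.
by apply: (lt_le_trans hy); exact: bigmin_le.
Qed.

Hypothesis d_compact : d_compact_space d.

Lemma compact_increasing_cover (U : nat -> set T) :
  (forall n, d_open d (U n)) -> (forall n, U n `<=` U n.+1) ->
  (forall x, exists n, U n x) -> exists N, forall x, U N x.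
Proof.
move=> Uo Ui Uc.
have Umono n m : (n <= m)%N -> U n `<=` U m.
  move=> /subnK <-; elim: (m - n)%N => [|k IH] //= x /IH; exact: Ui.
have hU : \bigcup_(i in setT) U i = setT.
  by apply/seteqP; split => // x _; have [n hn] := Uc x; exists n.
have [n [f hf]] := d_compact Uo hU.
exists (\max_(i < n) f i)%N => x; have [i hi] := hf x.
by apply: Umono hi; apply: (leq_bigmax_cond i).
Qed.

Lemma compact_bounded : exists D, 0 <= D /\ forall x y, d x y <= D.
Proof.
have [[t0 _]|hT] := pselect (exists t : T, True); last first.
  by exists 0; split => // x; case: hT; exists x.
have [|||N hN] := @compact_increasing_cover (fun n => dball d t0 n%:R).
- move=> n x hx; exists (n%:R - d t0 x); first by rewrite subr_gt0.
  move=> y hy; rewrite /dball /=; apply: (le_lt_trans (d_triangle t0 x y)).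
  by rewrite -ltrBrDl.
- by move=> n x; rewrite /dball /= => h; rewrite (lt_le_trans h) // ler_nat.
- by move=> x; exists (Num.truncn (d t0 x)).+1; rewrite /dball /= truncnS_gt.
exists (N%:R + N%:R); split; first by rewrite addr_ge0.
move=> x y; apply: (le_trans (d_triangle x t0 y)); rewrite d_sym.
by apply: lerD; apply: ltW; apply: hN.
Qed.

(* Cantor's intersection theorem, with closure points in place of points. *)
Lemma compact_nested_dclosure (C : nat -> set T) :
  (forall n, C n.+1 `<=` C n) -> (forall n, C n !=set0) ->
  exists z, forall n, dclosure (C n) z.
Proof.
move=> Cnest Cne.
have [[z hz]|hnz] := pselect (exists z, forall n, ~ dinterior (~` C n) z); last first.
  have [|||K hK] := @compact_increasing_cover (fun n => dinterior (~` C n)).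
  - by move=> n; exact: dinterior_open.
  - by move=> n; apply: dinterior_mono => x hx hx'; apply: hx; exact: Cnest.
  - move=> x; apply: contrapT => hx; apply: hnz; exists x => n hn; apply: hx.
    by exists n.
  have [y hy] := Cne K.
  by exfalso; have := dinterior_sub (hK y); apply.
exists z => n e e0; apply: contrapT => hne; apply: (hz n).
by exists e => // y hy hCy; apply: hne; exists y.
Qed.

Lemma dclosed_image (f : T -> T) (A : set T) :
  (forall x y, d (f x) (f y) <= d x y) -> dclosed A -> dclosed (f @` A).
Proof.
move=> fl cA p hp.
pose V (n : nat) := [set z | n.+1%:R^-1 < d (f z) p \/ ~ A z].
have [|||K hK] := @compact_increasing_cover (fun n => dinterior (V n)).
- by move=> n; exact: dinterior_open.
- move=> n; apply: dinterior_mono => z [h|h]; [left|by right].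
  apply: lt_trans h; rewrite ltf_pV2 ?posrE // ltr_nat //.
- move=> x; have [Ax|nAx] := pselect (A x); last first.
    have [e e0 he] := cA x nAx; exists 0%N, e => // z /he hz; by right.
  have c0 : 0 < d (f x) p.
    rewrite lt_neqAle d_ge0 // andbT; apply/eqP => h; apply: hp; exists x => //.
    by apply: d_eq0; rewrite h.
  set c := d (f x) p in c0 *.
  exists (Num.truncn (2 / c)), (c / 2); first by rewrite divr_gt0.
  move=> z hz; left; rewrite /dball /= in hz.
  have h1 : c - d x z <= d (f z) p.
    rewrite lerBlDr /c; apply: (le_trans (d_triangle (f x) (f z) p)).
    by rewrite addrC lerD2l; apply: fl.
  apply: lt_le_trans h1.
  have h2 : 1 / (Num.truncn (2 / c)).+1%:R < c / 2.
    rewrite ltr_pdivrMr // mulrC -ltr_pdivrMr ?divr_gt0 //.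
    by rewrite div1r invf_div truncnS_gt.
  rewrite -div1r; apply: (lt_le_trans h2).
  lra.
exists K.+1%:R^-1; first by rewrite invr_gt0.
move=> z hz [y Ay ey]; subst z.
have [] := dinterior_sub (hK y) => // h.
by move: hz; rewrite d_sym => /(lt_trans h); rewrite ltxx.
Qed.

Definition dcover (δ : R) (A : set T) (I : finType) (U : I -> set T) : Prop :=
  (forall i x y, U i x -> U i y -> d x y <= δ) /\ A `<=` \bigcup_(i in setT) U i.

Definition cover_sizes (δ : R) (A : set T) : set nat :=
  [set n : nat | exists U : 'I_n -> set T,
     (forall i, (ddiam d (U i) <= δ%:E)%E) /\ A `<=` \bigcup_(i in setT) U i].

Lemma ddiam_leP (U : set T) δ :
  (ddiam d U <= δ%:E)%E <-> forall x y, U x -> U y -> d x y <= δ.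
Proof.
split => [h x y ux uy|h].
  rewrite -lee_fin; apply: le_trans h; apply: ereal_sup_ubound.
  by exists x => //; exists y.
by apply/ereal_supP => _ [x ux [y uy <-]]; rewrite lee_fin; exact: h.
Qed.

Lemma cover_sizes_card δ A (I : finType) (U : I -> set T) :
  dcover δ A U -> cover_sizes δ A #|I|.
Proof.
move=> [hd hc]; exists (fun i => U (enum_val i)); split.
  by move=> i; apply/ddiam_leP => x y; exact: hd.
by move=> x /hc [i _ hi]; exists (enum_rank i) => //; rewrite enum_rankK.
Qed.

Lemma cover_sizesP δ A n : cover_sizes δ A n -> exists U : 'I_n -> set T, dcover δ A U.
Proof.
move=> [U [hd hc]]; exists U; split => // i x y ux uy.
exact: (proj1 (ddiam_leP (U i) δ) (hd i) x y ux uy).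
Qed.

Lemma cover_number_cases δ A :
  (cover_number d δ A = +oo%E /\ forall n, ~ cover_sizes δ A n) \/
  exists k, [/\ cover_number d δ A = (k%:R)%:E, cover_sizes δ A k &
     forall n, cover_sizes δ A n -> (k <= n)%N].
Proof.
have [[n0 hn0]|hno] := pselect (exists n, cover_sizes δ A n); last first.
  left; split; last by move=> n hn; apply: hno; exists n.
  apply/ereal_inf_pinfty => z [n hn hz]; exfalso.
  by apply: hno; exists n.
right.
have hex : exists n, `[< cover_sizes δ A n >] by exists n0; apply/asboolP.
case: (ex_minnP hex) => k /asboolP hk hmin.
exists k; split => //; last by move=> n hn; apply: hmin; apply/asboolP.
apply/eqP; rewrite eq_le; apply/andP; split.
  by apply: ereal_inf_lbound; exists k.
apply/ereal_infP => _ [n hn <-]; rewrite lee_fin ler_nat; apply: hmin.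
exact/asboolP.
Qed.

Lemma dcover_preimage (f : T -> T) a δ A (I : finType) (U : I -> set T) : 0 < a ->
  (forall x y, a * d x y <= d (f x) (f y)) ->
  dcover δ (f @` A) U -> dcover (δ / a) A (fun i => f @^-1` U i).
Proof.
move=> a0 hf [hd hc]; split.
  move=> i x y ux uy; rewrite ler_pdivlMr // mulrC.
  exact: le_trans (hf x y) (hd _ _ _ ux uy).
move=> x Ax; have [i _ hi] := hc (f x) (ex_intro2 _ _ x Ax erefl).
by exists i.
Qed.

Lemma dcover_images (J : finType) (f : J -> T -> T) δ A B (I : finType)
    (U : I -> set T) :
  A `<=` \bigcup_(j in setT) (f j @` B) ->
  (forall j x y, d (f j x) (f j y) <= d x y) ->
  dcover δ B U -> dcover δ A (fun p : J * I => f p.1 @` U p.2).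
Proof.
move=> hAB hf [hd hc]; split.
  move=> [j i] _ _ [x ux <-] [y uy <-] /=.
  exact: le_trans (hf j x y) (hd _ _ _ ux uy).
move=> x /hAB [j _ [b /hc [i _ hi] <-]]; exists (j, i) => //.
by exists b.
Qed.

Definition box_ratio (A : set T) (δ : R) : \bar R :=
  match cover_number d δ A with
  | EFin n => (ln n / (- ln δ))%:E
  | +oo%E => +oo%E
  | -oo%E => -oo%E end.

Lemma box_ratio_ge0 A (δ : R) : 0 < δ < 1 -> (0 <= box_ratio A δ)%E.
Proof.
move=> hδ; rewrite /box_ratio.
case: (cover_number_cases δ A) => [[-> _]|[k [-> _ _]]]; first by rewrite leey.
rewrite lee_fin; apply: divr_ge0; last exact/ltW/oppr_ln_gt0.
case: k => [|k]; first by rewrite ln0.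
by apply: ln_ge0; rewrite ler1n.
Qed.

Lemma upper_box_dim_ge0 (A : set T) : (0 <= upper_box_dim d A)%E.
Proof.
change (0 <= limsup0 (box_ratio A))%E.
by apply: limsup0_ge => δ hδ; exact: box_ratio_ge0.
Qed.

Lemma box_ratio_lt A (δ t : R) : 0 < δ < 1 -> (box_ratio A δ < t%:E)%E ->
  exists (I : finType) (U : I -> set T), dcover δ A U /\ #|I|%:R < δ `^ (-t).
Proof.
move=> hδ; rewrite /box_ratio.
case: (cover_number_cases δ A) => [[-> _]|[k [-> hk _]]] //.
rewrite lte_fin => hlt.
have [U hU] := cover_sizesP hk; exists 'I_k, U; split => //; rewrite card_ord.
have hl := oppr_ln_gt0 hδ; move: hlt; rewrite ltr_pdivrMr // => hlt.
rewrite /powR gt_eqF; last by case/andP: hδ.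
case: k {hk U hU} hlt => [|k] hlt; first by rewrite expR_gt0.
rewrite -[X in X < _](@lnK _ k.+1%:R) ?posrE ?ltr0n // ltr_expR.
by rewrite mulNr -mulrN.
Qed.

Lemma box_ratio_gt A (δ t : R) : 0 < δ < 1 -> 0 <= t -> (t%:E < box_ratio A δ)%E ->
  forall (I : finType) (U : I -> set T), dcover δ A U -> δ `^ (-t) < #|I|%:R.
Proof.
move=> hδ t0; rewrite /box_ratio.
case: (cover_number_cases δ A) => [[-> hno]|[k [-> hk hmin]]] h I U hc.
  by exfalso; apply: (hno #|I|); exact: cover_sizes_card hc.
move: h; rewrite lte_fin ltr_pdivlMr ?oppr_ln_gt0 // => h.
have hkI := hmin _ (cover_sizes_card hc).
apply: (@lt_le_trans _ _ k%:R); last by rewrite ler_nat.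
case: k {hk hmin hkI} h => [|k] h.
  exfalso; have h0 : 0 <= t * - ln δ by rewrite mulr_ge0 // ltW // oppr_ln_gt0.
  by move: (le_lt_trans h0 h); rewrite ln0 // ltxx.
rewrite /powR gt_eqF; last by case/andP: hδ.
rewrite -[X in _ < X](@lnK _ k.+1%:R) ?posrE ?ltr0n // ltr_expR.
by rewrite mulNr -mulrN.
Qed.

Lemma packing_delta_ge0 (s δ : R) A : (0 <= packing_delta d s δ A)%E.
Proof.
apply: le_ereal_sup_tmp; exists 0%E => //.
have x0 : 'I_0 -> T by case=> m; rewrite ltn0.
by exists 0%N, x0, (fun _ => 0); split => [[m]|[m]|]; rewrite ?ltn0 ?big_ord0.
Qed.

Lemma packing_premeasure_ge0 (s : R) A : (0 <= packing_premeasure d s A)%E.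
Proof. by apply: limsup0_ge => δ _; exact: packing_delta_ge0. Qed.

Lemma packing_premeasure_le_series (s : R) (G : nat -> set T) i :
  (packing_premeasure d s (G i) <= \sum_(j <oo) packing_premeasure d s (G j))%E.
Proof.
have := @nneseries_lim_ge R (fun j => packing_premeasure d s (G j)) xpredT 0%N i.+1
  (fun n _ _ => packing_premeasure_ge0 s (G n)).
apply: le_trans.
rewrite big_nat_recr //=; apply: lee_paddl => //.
by apply: sume_ge0 => n _; exact: packing_premeasure_ge0.
Qed.

Lemma packing_measure_eq0 (s : R) A : packing_premeasure d s A = 0%E ->
  packing_measure d s A = 0%E.
Proof.
move=> h; apply/eqP; rewrite eq_le; apply/andP; split.
  apply: ge_ereal_inf; exists 0%E => //; exists (fun _ => A).
    by move=> x Ax; exists 0%N.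
  by apply: eseries0 => i _ _ /=.
apply/ereal_infP => _ [G hG <-].
by apply: nneseries_ge0 => n _ _; exact: packing_premeasure_ge0.
Qed.

(* A ball of radius [r_i > ρ] centred in [A] contains the whole piece of a
   [ρ]-cover containing its centre, so such balls are at most [#|I|] many. *)
Lemma packing_count_le_cover ρ A (I : finType) (U : I -> set T) n
    (x : 'I_n -> T) (r : 'I_n -> R) :
  dcover ρ A U -> (forall i, A (x i)) -> (forall i, 0 < r i) ->
  (forall i j, i != j -> dball d (x i) (r i) `&` dball d (x j) (r j) = set0) ->
  (#|[pred i : 'I_n | (ρ < r i)%R]| <= #|I|)%N.
Proof.
move=> [hd hc] hA hr hdis.
have H1 i : exists c : I, U c (x i) by have [c _ hcx] := hc _ (hA i); exists c.
have [c hcf] := choice H1.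
apply: (@leq_card_in _ _ c) => i j; rewrite !inE => ri rj eij.
apply: contrapT => nij; have nij' : i != j by apply/eqP.
have : (dball d (x i) (r i) `&` dball d (x j) (r j)) (x j).
  split; rewrite /dball /=; last by rewrite d_refl.
  apply: le_lt_trans ri; apply: (hd (c i)); first exact: hcf.
  by rewrite eij; exact: hcf.
by rewrite (hdis i j nij').
Qed.

Lemma packing_premeasure_eq0 (A : set T) (s t : R) : 0 <= t -> t < s ->
  (exists2 ε : R, 0 < ε & forall δ, 0 < δ < ε ->
     exists (I : finType) (U : I -> set T), dcover δ A U /\ #|I|%:R < δ `^ (-t)) ->
  packing_premeasure d s A = 0%E.
Proof.
move=> t0 ts [ε ε0 hcov].
apply/eqP; rewrite eq_le packing_premeasure_ge0 andbT.
apply: limsup0_le0 => η η0.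
set C := 2 `^ s * (2^-1) `^ (-t) / (1 - (2^-1) `^ (s - t)).
have st0 : 0 < s - t by rewrite subr_gt0.
have C0 : 0 <= C.
  rewrite /C mulr_ge0 ?mulr_ge0 ?powR_ge0 // invr_ge0 subr_ge0 ltW //.
  exact: half_powR_lt1.
have C10 : 0 < C + 1 by rewrite ltr_wpDl.
have [δ1 δ10 hδ1] := powR_le_small (divr_gt0 η0 C10) st0.
exists (Order.min ε δ1); first by rewrite lt_min ε0 δ10.
move=> δ /andP[δ0]; rewrite lt_min => /andP[δε δδ1].
apply/ereal_supP => _ [n [x [r [hxr hdis ->]]]].
rewrite sumEFin lee_fin.
apply: le_trans.
  apply: (sum_powR_dyadic_le t0 ts δ0) => [i|j]; first by case: (hxr i).
  set ρ := (2^-1) ^+ j.+1 * δ.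
  have ρ0 : 0 < ρ by rewrite mulr_gt0 // exprn_gt0.
  have ρε : ρ < ε.
    apply: le_lt_trans δε; rewrite /ρ ler_piMl ?(ltW δ0) //.
    by rewrite exprn_ile1 // ?invr_ge0 // invf_le1 // ler1n.
  have [I [U [hU hI]]] := hcov ρ (introT andP (conj ρ0 ρε)).
  apply: le_trans (ltW hI); rewrite ler_nat.
  apply: (packing_count_le_cover (x:=x) (r:=r) hU) => // i; first by case: (hxr i).
  by case: (hxr i) => _ /andP[].
have hpow : δ `^ (s - t) <= η / (C + 1) by apply: hδ1; rewrite δ0 δδ1.
apply: le_trans (ler_wpM2l C0 hpow) _.
rewrite mulrCA -[X in _ <= X]mulr1; apply: ler_wpM2l; first exact: ltW.
by rewrite ler_pdivrMr // mul1r lerDl.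
Qed.

Lemma packing_measure_eq0_gt_upper_box_dim (A : set T) (s : R) :
  (upper_box_dim d A < s%:E)%E -> packing_measure d s A = 0%E.
Proof.
move=> hB; have B0 := upper_box_dim_ge0 A.
have hf : upper_box_dim d A \is a fin_num.
  by rewrite ge0_fin_numE // (lt_trans hB) // ltry.
set b := fine (upper_box_dim d A).
have eB : upper_box_dim d A = b%:E by rewrite fineK.
rewrite eB lte_fin in hB; rewrite eB lee_fin in B0.
set t := (b + s) / 2.
have t0 : 0 <= t by rewrite /t; lra.
have ts : t < s by rewrite /t; lra.
have hBt : (limsup0 (box_ratio A) < t%:E)%E.
  by change (upper_box_dim d A < t%:E)%E; rewrite eB lte_fin /t; lra.
have [ε ε0 hε] := limsup0_lt hBt.
apply: packing_measure_eq0; apply: (packing_premeasure_eq0 t0 ts).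
exists (Order.min ε 1); first by rewrite lt_min ε0 ltr01.
move=> δ /andP[δ0]; rewrite lt_min => /andP[h1 h2].
apply: box_ratio_lt; first by rewrite δ0 h2.
by apply: hε; rewrite δ0 h1.
Qed.

Lemma packing_dim_le_upper_box_dim (A : set T) :
  (packing_dim d A <= upper_box_dim d A)%E.
Proof.
have B0 := upper_box_dim_ge0 A.
have [->|hB] := eqVneq (upper_box_dim d A) +oo%E; first exact: leey.
have hf : upper_box_dim d A \is a fin_num by rewrite ge0_fin_numE // ltey.
set b := fine (upper_box_dim d A).
rewrite -(fineK hf); apply/lee_addgt0Pr => e e0.
apply: ge_ereal_inf; exists (b + e)%:E; last by rewrite EFinD.
exists (b + e) => //; split; first by rewrite addr_ge0 ?(ltW e0) // -lee_fin fineK.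
by apply: packing_measure_eq0_gt_upper_box_dim; rewrite -(fineK hf) lte_fin ltrDl.
Qed.

(* Greedy choice: as long as fewer than [X + 1] points are chosen, the balls of
   radius [3ρ] around them (diameter [6ρ]) cannot cover [C], and a point of [G]
   within [ρ] of an uncovered point of [C] is [2ρ]-far from all chosen ones. *)
Lemma greedy_separated (ρ X : R) (C G : set T) : 0 < ρ -> 0 <= X ->
  C `<=` dclosure G ->
  (forall (I : finType) (U : I -> set T), dcover (6 * ρ) C U -> X < #|I|%:R) ->
  forall m : nat, m%:R <= X + 1 -> exists y : nat -> T,
    (forall i, (i < m)%N -> G (y i)) /\
    (forall i j, (i < m)%N -> (j < m)%N -> i != j -> 2 * ρ <= d (y i) (y j)).
Proof.
move=> ρ0 X0 hcl hX.
have [t0 _] : exists t : T, True.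
  apply: contrapT => hnT; suff : X < #|'I_0|%:R by rewrite card_ord ltNge X0.
  by apply: (hX _ (fun _ => set0)); split => // x _; exfalso; apply: hnT; exists x.
elim=> [|m IH] hm; first by exists (fun _ => t0); split.
have hm' : m%:R <= X by move: hm; rewrite -natr1 lerD2r.
have hm1 : m%:R <= X + 1 by apply: (le_trans hm'); rewrite lerDl.
have [y [hG hsep]] := IH hm1.
have [e [Ce he]] : exists e, C e /\ forall i : 'I_m, ~ d (y i) e < 3 * ρ.
  apply: contrapT => hne.
  suff : X < #|'I_m|%:R by rewrite card_ord ltNge hm'.
  apply: (hX _ (fun i : 'I_m => dball d (y i) (3 * ρ))); split.
    move=> i a b; rewrite /dball /= => ha hb.
    by apply: (le_trans (d_triangle a (y i) b)); rewrite (d_sym a); lra.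
  move=> e Ce; apply: contrapT => hni; apply: hne; exists e; split => // i hi.
  by apply: hni; exists i.
have [y' Gy' ey'] := hcl e Ce ρ ρ0.
have far i : (i < m)%N -> 2 * ρ <= d (y i) y'.
  move=> im; have := he (Ordinal im); move/negP; rewrite -leNgt /= => h1.
  by have := d_triangle (y i) y' e; rewrite (d_sym y' e); lra.
exists (fun i => if i == m then y' else y i); split.
  by move=> i; rewrite ltnS leq_eqVlt; case: eqP => // _ /= /hG.
move=> i j; rewrite !ltnS => hi hj ij.
case: (eqVneq i m) => [ei|im]; case: (eqVneq j m) => [ej|jm].
- by move: ij; rewrite ei ej eqxx.
- by rewrite d_sym; apply: far; rewrite ltn_neqAle jm hj.
- by apply: far; rewrite ltn_neqAle im hi.
- by apply: hsep; rewrite // ltn_neqAle ?im ?jm.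
Qed.

Lemma packing_delta_ge_separated (s ρ : R) (G : set T) (m : nat) (y : nat -> T) :
  0 < ρ -> (forall i, (i < m)%N -> G (y i)) ->
  (forall i j, (i < m)%N -> (j < m)%N -> i != j -> 2 * ρ <= d (y i) (y j)) ->
  ((m%:R * (2 * ρ) `^ s)%:E <= packing_delta d s ρ G)%E.
Proof.
move=> ρ0 hG hsep; apply: ereal_sup_ubound.
exists m, (fun i : 'I_m => y i), (fun _ => ρ); split.
- by move=> i; split; [exact: hG|rewrite ρ0 lexx].
- move=> i j ij; apply/seteqP; split => // z [/= h1 h2].
  have := hsep i j (ltn_ord i) (ltn_ord j) ij.
  have := d_triangle (y i) z (y j); rewrite (d_sym z).
  rewrite /dball /= in h1 h2; lra.
- by rewrite sumEFin sumr_const card_ord mulr_natl.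
Qed.

Lemma bilip_contraction_mul (f : T -> T) : bilip_contraction d f ->
  exists a b : R, [/\ 0 < a, b < 1 &
    forall x y, a * d x y <= d (f x) (f y) /\ d (f x) (f y) <= b * d x y].
Proof.
move=> [[a a0 ha] [b b1 hb]]; exists a, b; split => // x y.
have [->|xy] := pselect (x = y); first by rewrite !d_refl !mulr0.
have dxy : 0 < d x y.
  rewrite lt_neqAle d_ge0 andbT; apply/eqP => h; apply: xy.
  exact: d_eq0 (esym h).
by split; [rewrite -ler_pdivlMr //; exact: ha | rewrite -ler_pdivrMr //; exact: hb].
Qed.

Section RandomIFS.
Variables (N : nat) (M : 'I_N -> nat) (S : forall i : 'I_N, 'I_(M i) -> T -> T).
Arguments S : clear implicits.
Hypothesis M_gt0 : forall i, (0 < M i)%N.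
Hypothesis S_bilip : forall i j, bilip_contraction d (S i j).

Local Notation level := (rifs_level S).
Local Notation attractor := (rifs_attractor S).

Lemma uniform_contraction_constants : exists a b : R, [/\ 0 < a, a <= 1, 0 <= b, b < 1 &
  forall i j x y, a * d x y <= d (S i j x) (S i j y) /\ d (S i j x) (S i j y) <= b * d x y].
Proof.
pose P := {i : 'I_N & 'I_(M i)}.
have H1 (p : P) : exists ab : R * R, [/\ 0 < ab.1, ab.2 < 1 &
  forall x y, ab.1 * d x y <= d (S (tag p) (tagged p) x) (S (tag p) (tagged p) y) /\
     d (S (tag p) (tagged p) x) (S (tag p) (tagged p) y) <= ab.2 * d x y].
  by have [a [b hab]] := bilip_contraction_mul (S_bilip (tagged p)); exists (a, b).
have [f hf] := choice H1.
exists (Order.min 1 (\big[Order.min/1]_p (f p).1)).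
exists (Order.max 0 (\big[Order.max/0]_p (f p).2)); split.
- by rewrite lt_min ltr01 /=; apply: lt_bigmin => // p _; case: (hf p).
- by rewrite ge_min lexx.
- by rewrite le_max lexx.
- by rewrite gt_max ltr01 /=; apply: bigmax_lt => // p _; case: (hf p).
move=> i j x y; have [_ _ /(_ x y) [h1 h2]] := hf (Tagged (fun i => 'I_(M i)) j).
split.
- apply: le_trans h1; apply: ler_wpM2r; first exact: d_ge0.
  by rewrite ge_min; apply/orP; right; exact: bigmin_le.
- apply: le_trans h2 _; apply: ler_wpM2r; first exact: d_ge0.
  by rewrite le_max; apply/orP; right; exact: le_bigmax.
Qed.

Lemma S_lipschitz i j x y : d (S i j x) (S i j y) <= d x y.
Proof.
have [a [b [_ _ b0 b1 h]]] := uniform_contraction_constants.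
have [_ /le_trans -> //] := h i j x y.
by rewrite ler_piMl // ?d_ge0 // ltW.
Qed.

Lemma S_inj (i : 'I_N) (j : 'I_(M i)) : injective (S i j).
Proof.
have [a [b [a0 _ _ _ h]]] := uniform_contraction_constants.
move=> x y e; have [h1 _] := h i j x y; move: h1; rewrite e d_refl => h1.
apply: d_eq0; apply/eqP; rewrite eq_le d_ge0 andbT.
by rewrite -(@pmulr_rle0 _ a).
Qed.

Definition shift (w : nat -> 'I_N) : nat -> 'I_N := fun n => w n.+1.

Lemma level_succ n w : level n.+1 w =
  \bigcup_(j in [set: 'I_(M (w 0))]) (S (w 0) j @` level n (shift w)).
Proof. by []. Qed.

Lemma level_nest n w : level n.+1 w `<=` level n w.
Proof.
elim: n w => [|n IH] w x //; rewrite level_succ => -[j _ [y hy <-]].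
by rewrite level_succ; exists j => //; exists y => //; exact: IH.
Qed.

Lemma level_mono n m w : (n <= m)%N -> level m w `<=` level n w.
Proof.
move=> /subnK <-; elim: (m - n)%N => [|k IH] //= x /level_nest; exact: IH.
Qed.

Lemma attractorP w x : attractor w x <-> forall n, level n w x.
Proof. by split => [h n|h n _]; [exact: h|exact: h]. Qed.

Lemma attractor_image_sub w j : S (w 0) j @` attractor (shift w) `<=` attractor w.
Proof.
move=> _ [y /attractorP hy <-]; apply/attractorP => -[|n] //.
by rewrite level_succ; exists j => //; exists y.
Qed.

(* Finitely many first letters, so one of them works at every level; by
   injectivity the corresponding preimages of [x] all coincide. *)
Lemma attractor_decomp w x : attractor w x ->
  exists j y, attractor (shift w) y /\ x = S (w 0) j y.
Proof.
move/attractorP => hx.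
have [j hj] : exists j, forall n, exists y, level n (shift w) y /\ x = S (w 0) j y.
  apply/not_existsP => hn.
  have H1 : forall j : 'I_(M (w 0)), exists n : nat,
      ~ exists y, level n (shift w) y /\ x = S (w 0) j y.
    by move=> j; apply/existsNP; exact: hn.
  have [nf hnf] := choice H1.
  have := hx (\max_j nf j).+1; rewrite level_succ => -[j _ [y hy ey]].
  apply: (hnf j); exists y; split => //.
  by apply: level_mono hy; exact: leq_bigmax.
have [y0 [_ e0]] := hj 0%N.
exists j, y0; split => //; apply/attractorP => n.
have [y [hy ey]] := hj n.
by rewrite (S_inj (etrans (esym e0) ey)).
Qed.

Lemma level_dclosed n w : dclosed (level n w).
Proof.
elim: n w => [|n IH] w; first by move=> p hp; exfalso; apply: hp.
rewrite level_succ; apply: dclosed_bigcup => j; apply: dclosed_image => //.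
exact: S_lipschitz.
Qed.

Lemma attractor_dclosed w : dclosed (attractor w).
Proof. by apply: dclosed_bigcap => n; exact: level_dclosed. Qed.

Definition word (w : nat -> 'I_N) := forall m, 'I_(M (w m)).
Definition word_shift w (v : word w) : word (shift w) := fun m => v m.+1.
Definition word_cons w (j : 'I_(M (w 0))) (v : word (shift w)) : word w :=
  fun m => match m as m0 return 'I_(M (w m0)) with 0 => j | m'.+1 => v m' end.
Definition word_default w : word w := fun m => Ordinal (M_gt0 (w m)).

Definition prefix_agree w k (v v' : word w) := forall m, (m < k)%N -> v' m = v m.

Fixpoint cylinder (w : nat -> 'I_N) (k : nat) (v : word w) {struct k} : set T :=
  match k with
  | 0 => attractor w
  | k'.+1 => S (w 0) (v 0) @` cylinder k' (word_shift v)
  end.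

Fixpoint nwords (w : nat -> 'I_N) (k : nat) : nat :=
  match k with 0 => 1%N | k'.+1 => (M (w 0) * nwords (shift w) k')%N end.

Lemma nwords_gt0 w k : (0 < nwords w k)%N.
Proof. by elim: k w => [|k IH] w //=; rewrite muln_gt0 M_gt0 IH. Qed.

Lemma cylinder_sub_attractor k w (v : word w) : cylinder k v `<=` attractor w.
Proof.
elim: k w v => [|k IH] w v //= _ [y hy <-]; apply: attractor_image_sub.
by exists y => //; exact: IH hy.
Qed.

Lemma cylinder_nest k m w (v v' : word w) : prefix_agree k v v' ->
  cylinder (k + m) v' `<=` cylinder k v.
Proof.
elim: k w v v' => [|k IH] w v v' hag; first exact: cylinder_sub_attractor.
move=> _ [y hy <-]; rewrite (hag 0%N isT); exists y => //.
by apply: (IH (shift w) (word_shift v) (word_shift v')) hy => i hi; exact: hag.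
Qed.

Lemma attractor_sub_cylinder m w y : attractor w y -> exists v : word w, cylinder m v y.
Proof.
elim: m w y => [|m IH] w y hy; first by exists (word_default w).
have [j [y' [hy' ->]]] := attractor_decomp hy.
have [v hv] := IH _ _ hy'.
by exists (word_cons j v); exists y'.
Qed.

Lemma cylinder_refine k w (v : word w) y : cylinder k v y ->
  forall m, exists v' : word w, prefix_agree k v v' /\ cylinder (k + m) v' y.
Proof.
elim: k w v y => [|k IH] w v y hy m.
  by have [v' hv'] := attractor_sub_cylinder m hy; exists v'.
case: hy => y' hy' <-.
have [v'' [hag hc]] := IH _ _ _ hy' m.
exists (word_cons (v 0) v''); split; last by exists y'.
by case => [|i] // hi; exact: hag.
Qed.

Lemma cylinder_dist_le D b : (forall x y, d x y <= D) -> 0 <= b ->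
  (forall i j x y, d (S i j x) (S i j y) <= b * d x y) ->
  forall k w (v : word w) x y, cylinder k v x -> cylinder k v y -> d x y <= b ^+ k * D.
Proof.
move=> hD b0 hb; elim=> [|k IH] w v x y; first by rewrite expr0 mul1r.
move=> [x' hx' <-] [y' hy' <-]; apply: (le_trans (hb _ _ _ _)).
by rewrite exprS -mulrA ler_wpM2l //; exact: IH hx' hy'.
Qed.

(* Pull a cover of the cylinder back through its first map (diameters grow by at
   most [1/a]) and push it forward by all first-level maps; after [k] steps the
   attractor is covered, at the cost of a factor [nwords w k]. *)
Lemma dcover_from_cylinder (a : R) : 0 < a ->
  (forall i j x y, a * d x y <= d (S i j x) (S i j y)) ->
  forall k w (v : word w) δ (I : finType) (U : I -> set T),
  dcover δ (cylinder k v) U ->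
  exists (J : finType) (U' : J -> set T),
    dcover (δ / a ^+ k) (attractor w) U' /\ #|J| = (nwords w k * #|I|)%N.
Proof.
move=> a0 ha; elim=> [|k IH] w v δ I U hc.
  by exists I, U; rewrite expr0 divr1 mul1n.
have [J [U' [hJ eJ]]] := IH _ _ _ _ _ (dcover_preimage a0 (ha _ _) hc).
have hA : attractor w `<=` \bigcup_(j in setT) (S (w 0) j @` attractor (shift w)).
  by move=> x /attractor_decomp [j [y [hy ->]]]; exists j => //; exists y.
exists ('I_(M (w 0)) * J)%type, (fun p => S (w 0) p.1 @` U' p.2); split.
  by rewrite exprS invfM mulrA; exact: dcover_images hA (S_lipschitz (i:=w 0)) hJ.
by rewrite card_prod card_ord eJ /= mulnA.
Qed.

Lemma cylinder_dcover_card_gt (a δ t : R) w k (v : word w) (I : finType)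
    (U : I -> set T) :
  0 < a -> (forall i j x y, a * d x y <= d (S i j x) (S i j y)) ->
  0 < δ < 1 -> 0 <= t -> (t%:E < box_ratio (attractor w) δ)%E ->
  dcover (δ * a ^+ k) (cylinder k v) U -> δ `^ (-t) < (nwords w k * #|I|)%:R.
Proof.
move=> a0 ha hδ t0 ht hU.
have [J [U' [hJ <-]]] := dcover_from_cylinder a0 ha hU.
rewrite mulfK ?expf_neq0 ?gt_eqF // in hJ.
exact: box_ratio_gt hδ t0 ht _ _ hJ.
Qed.

Lemma cylinder_refine_avoid w k (v : word w) (G : set T) :
  ~ cylinder k v `<=` dclosure G ->
  exists k' (v' : word w), [/\ (k <= k')%N, prefix_agree k v v' &
     dclosure (cylinder k' v') `<=` ~` G].
Proof.
move=> hno.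
have [y [hy nGy]] : exists y, cylinder k v y /\ ~ dclosure G y.
  apply: contrapT => hn; apply: hno => y hy; apply: contrapT => nGy.
  by apply: hn; exists y.
have [r r0 hr] : exists2 r : R, 0 < r & forall z, d y z < r -> ~ G z.
  apply: contrapT => hn; apply: nGy => e e0; apply: contrapT => hne; apply: hn.
  by exists e => // z hz Gz; apply: hne; exists z.
have [a [b [_ _ b0 b1 hab]]] := uniform_contraction_constants.
have [D [D0 hD]] := compact_bounded.
have r20 : 0 < r / 2 by rewrite divr_gt0.
have hb : 0 <= b < 1 by rewrite b0 b1.
have [m hm] := exists_expr_lt hb (divr_gt0 r20 (ltr_wpDl D0 ltr01)).
have [v' [hag hc]] := cylinder_refine hy m.
exists (k + m)%N, v'; split => //; first exact: leq_addr.
move=> z hz Gz; have [c hc' hzc] := hz (r / 2) r20.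
have dyc := cylinder_dist_le hD b0 (fun i j x y => (hab i j x y).2) hc hc'.
have hbm : b ^+ (k + m) <= b ^+ m.
  by apply: ler_wiXn2l => //; [exact: ltW|exact: leq_addl].
have h1 : b ^+ (k + m) * D <= b ^+ m * (D + 1).
  apply: le_trans (_ : b ^+ m * D <= _); first exact: ler_wpM2r.
  by apply: ler_wpM2l; [exact: exprn_ge0|rewrite lerDl].
have h2 : b ^+ m * (D + 1) < r / 2 by move: hm; rewrite ltr_pdivlMr // ltr_wpDl.
have h3 := d_triangle y c z; rewrite (d_sym c z) in h3.
by apply: (hr z) => //; lra.
Qed.

(* Baire category argument inside the attractor: were no cylinder contained in
   the closure of some [G i], repeated refinement would give nested cylinders
   whose common closure point lies in the attractor but in no [G i]. *)
Lemma baire_cylinder w (G : nat -> set T) : attractor w `<=` \bigcup_(i in setT) G i ->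
  exists i k (v : word w), cylinder k v `<=` dclosure (G i).
Proof.
move=> hcov; apply: contrapT => hno.
have hstep (i : nat) (p : {k : nat & word w}) : exists p' : {k : nat & word w},
  [/\ (projT1 p <= projT1 p')%N, prefix_agree (projT1 p) (projT2 p) (projT2 p') &
      dclosure (cylinder (projT1 p') (projT2 p')) `<=` ~` G i].
  case: p => k v; have [|k' [v' hv']] := @cylinder_refine_avoid w k v (G i).
    by move=> h; apply: hno; exists i, k, v.
  by exists (existT _ k' v').
pose next i := projT1 (choice (hstep i)).
have hnext i := projT2 (choice (hstep i)).
pose fix sq (n : nat) : {k : nat & word w} :=
  match n with 0 => existT _ 0%N (word_default w) | n'.+1 => next n' (sq n') end.
pose C n := cylinder (projT1 (sq n)) (projT2 (sq n)).
have Cnest n : C n.+1 `<=` C n.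
  have [hle hag _] := hnext n (sq n).
  move=> x; have := @cylinder_nest _ (projT1 (sq n.+1) - projT1 (sq n))%N _ _ _ hag x.
  by rewrite subnKC //; apply.
have Cne n : C n !=set0.
  apply: contrapT => hn; apply: hno; exists 0%N, (projT1 (sq n)), (projT2 (sq n)).
  by move=> x hx; exfalso; apply: hn; exists x.
have [z hz] := compact_nested_dclosure Cnest Cne.
have [i _ Giz] := hcov z (dclosure_sub (attractor_dclosed (w := w)) (hz 0%N)).
have [_ _ hG] := hnext i (sq i).
exact: hG z (hz i.+1) Giz.
Qed.

(* Covering a cylinder takes at least [N_δ(F) / nwords w k] sets of diameter
   [δ a^k], so a set dense in it has that many points [2ρ]-apart, [ρ = δ a^k / 6];
   the threshold [e] makes the resulting packing sum at least [1]. *)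
Lemma packing_premeasure_ge1 w k (v : word w) (G : set T) (s t : R) :
  0 <= s -> s < t -> (t%:E < upper_box_dim d (attractor w))%E ->
  cylinder k v `<=` dclosure G -> (1 <= packing_premeasure d s G)%E.
Proof.
move=> s0 st hB hcl.
have [a [b [a0 a1 _ _ hab]]] := uniform_contraction_constants.
have t0 : 0 <= t by apply: ltW; exact: le_lt_trans st.
set P : R := (nwords w k)%:R.
have P0 : 0 < P by rewrite ltr0n nwords_gt0.
set c := a ^+ k / 3.
have c0 : 0 < c by rewrite divr_gt0 // exprn_gt0.
have ts0 : 0 < t - s by rewrite subr_gt0.
have [e e0 he] := powR_le_small (divr_gt0 (powR_gt0 s c0) P0) ts0.
apply/ereal_infP => _ [ε ε0 <-].
have ε20 : 0 < Order.min (Order.min ε 1) e by rewrite !lt_min ε0 ltr01 e0.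
have [δ [/andP[δ0 hδ] hgt]] := limsup0_gt hB ε20.
move: hδ; rewrite !lt_min => /andP[/andP[δε δ1] δe].
set ρ := δ * a ^+ k / 6.
have ρ0 : 0 < ρ by rewrite divr_gt0 // mulr_gt0 // exprn_gt0.
have e2ρ : 2 * ρ = δ * c by rewrite /ρ /c; field.
have ρε : ρ < ε.
  have ak1 : a ^+ k <= 1 by rewrite exprn_ile1 // ltW.
  apply: le_lt_trans δε; rewrite /ρ ler_pdivrMr //.
  by apply: ler_wpM2l; [exact: ltW|lra].
set X := δ `^ (-t) / P.
have X0 : 0 <= X by rewrite divr_ge0 ?powR_ge0 // ltW.
have hX (I : finType) (U : I -> set T) :
    dcover (6 * ρ) (cylinder k v) U -> X < #|I|%:R.
  rewrite (_ : 6 * ρ = δ * a ^+ k); last by rewrite /ρ; field.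
  move=> hU; have hδ01 : 0 < δ < 1 by rewrite δ0 δ1.
  have := cylinder_dcover_card_gt a0 (fun i j x y => (hab i j x y).1) hδ01 t0 hgt hU.
  by rewrite natrM /X ltr_pdivrMr // mulrC.
set m := (Num.truncn X).+1.
have hm : m%:R <= X + 1 by rewrite /m -natr1 lerD2r truncn_le.
have hXm : X < m%:R by rewrite /m truncnS_gt.
have [y [hG hsep]] := greedy_separated ρ0 X0 hcl hX hm.
have key : 1 <= X * (δ * c) `^ s by apply: powR_scale_ge1 => //; apply: he; rewrite δ0 δe.
apply: le_ereal_sup_tmp; exists (packing_delta d s ρ G).
  by exists ρ => //; apply/andP; split.
apply: le_trans (packing_delta_ge_separated s ρ0 hG hsep); rewrite lee_fin e2ρ.
by apply: le_trans key _; apply: ler_wpM2r; [exact: powR_ge0|exact: ltW hXm].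
Qed.

Lemma upper_box_dim_le_packing_dim w :
  (upper_box_dim d (attractor w) <= packing_dim d (attractor w))%E.
Proof.
apply/ereal_infP => _ [s [s0 hs] <-].
rewrite leNgt; apply/negP => hlt.
have [t [st tB]] : exists t : R, s < t /\ (t%:E < upper_box_dim d (attractor w))%E.
  move: hlt; case: (upper_box_dim d (attractor w)) => [b| |] hlt //.
  - by exists ((s + b) / 2); rewrite lte_fin in hlt; split; [lra|rewrite lte_fin; lra].
  - by exists (s + 1); split; [lra|exact: ltry].
suff : (1 <= packing_measure d s (attractor w))%E by rewrite hs lee_fin ler10.
apply/ereal_infP => _ [G hG <-].
have [i [k [v hcl]]] := baire_cylinder hG.
exact: le_trans (packing_premeasure_ge1 s0 st tB hcl) (packing_premeasure_le_series s G i).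
Qed.

End RandomIFS.
End Metric.

Theorem lemma3p2 (R : realType) (T : Type) (d : T -> T -> R)
  (N : nat) (M : 'I_N -> nat) (S : forall i : 'I_N, 'I_(M i) -> T -> T) :
  is_metric d -> d_compact_space d ->
  (forall i, (0 < M i)%N) ->
  (forall i j, bilip_contraction d (S i j)) ->
  forall w : nat -> 'I_N,
    packing_dim d (rifs_attractor S w) = upper_box_dim d (rifs_attractor S w).
Proof.
move=> dm dc M_gt0 S_bilip w; apply/eqP; rewrite eq_le.
by rewrite packing_dim_le_upper_box_dim // (upper_box_dim_le_packing_dim dm dc M_gt0 S_bilip).
Qed.
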